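(* Let $\beta>2\alpha>0$ with $\beta+2\alpha>1$, let $\varphi_N(x)=\frac12x^TAx-\sum_{k=1}^{s_N}\log\cosh(x^TAe_k)$ for $x\in\mathbb{R}^{s_N}$, and let $x$ be a minimizer of $\varphi_N$. Then $x_k\ge0$ for some $k\in\{1,\dots,s_N\}$ if and only if $x_k\ge0$ for all $k\in\{1,\dots,s_N\}$.
   Context: $A$ is the $s_N\times s_N$ symmetric circulant matrix $A=\beta I+\alpha(P+P^T)$, where $P$ is the cyclic shift matrix (so $A_{kk}=\beta$, $A_{k,k\pm1}=\alpha$ with indices mod $s_N$); $e_k$ are the standard basis vectors of $\mathbb{R}^{s_N}$. *)

From mathcomp Require Import all_boot all_order all_algebra.
From mathcomp Require Import all_classical all_reals all_analysis.
Set Implicit Arguments. Unset Strict Implicit. Unset Printing Implicit Defensive.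
Import Order.TTheory GRing.Theory Num.Theory.
Local Open Scope ring_scope.

Definition cosh {R : realType} (t : R) : R := (expR t + expR (- t)) / 2.

Definition cyc_shift {R : realType} (n : nat) : 'M[R]_n :=
  \matrix_(i < n, j < n) ((nat_of_ord i == ((nat_of_ord j).+1 %% n)%N)%:R).

Definition circA {R : realType} (n : nat) (alpha beta : R) : 'M[R]_n :=
  beta%:M + alpha *: (cyc_shift n + (cyc_shift n)^T).

Definition ebasis {R : realType} (n : nat) (k : 'I_n) : 'cV[R]_n := delta_mx k 0.

Definition phiN {R : realType} (n : nat) (alpha beta : R) (x : 'cV[R]_n) : R :=
  2^-1 * (x^T *m circA n alpha beta *m x) 0 0
  - \sum_(k < n) ln (cosh ((x^T *m circA n alpha beta *m ebasis (R:=R) k) 0 0)).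

From mathcomp Require Import all_boot all_order all_algebra.
From mathcomp Require Import all_classical all_reals all_analysis.
From mathcomp Require Import ring lra zify.
Import Order.TTheory GRing.Theory Num.Theory.
Local Open Scope ring_scope.

(* A minimizer x is a fixed point of the mean-field map x |-> tanh (A x): the
   tangent-line bound for the convex function ln cosh gives
   phi (tanh (A x)) <= phi x - (x - tanh (A x))^T A (x - tanh (A x)) / 2,
   and A >= (beta - 2 alpha) I is positive definite.  As A has nonnegative
   entries and x = tanh (A x), moreover phi |x| <= phi x, so |x| is a minimizer
   too and tanh (A |x|) = |x| = |tanh (A x)|, i.e. A |x| = |A x|.  Now if
   x_k >= 0 then (A x)_k >= 0, hence sum_i A_ik (|x_i| - x_i) = 0; since
   A_(k+1)k >= alpha > 0 this forces x_(k+1) >= 0, and going around the cycle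
   gives x >= 0. *)

Definition tanh {R : realType} (t : R) : R :=
  (expR t - expR (- t)) / (expR t + expR (- t)).

Section HyperbolicFunctions.
Variable R : realType.
Implicit Types a b t : R.

Lemma expR_addN_gt0 t : 0 < expR t + expR (- t).
Proof. by rewrite addr_gt0 ?expR_gt0. Qed.

Lemma cosh_gt0 t : 0 < cosh t.
Proof. by rewrite divr_gt0 ?expR_addN_gt0. Qed.

Lemma coshN t : cosh (- t) = cosh t.
Proof. by rewrite /cosh opprK addrC. Qed.

Lemma tanhN t : tanh (- t) = - tanh t.
Proof. by rewrite /tanh opprK (addrC (expR (- t))) -mulNr; congr (_ / _); ring. Qed.

Lemma tanh_ge0 t : 0 <= t -> 0 <= tanh t.
Proof.
move=> t0; rewrite divr_ge0 ?(ltW (expR_addN_gt0 _)) //.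
by rewrite subr_ge0 ler_expR; lra.
Qed.

Lemma tanh_lt0 t : t < 0 -> tanh t < 0.
Proof.
move=> t0; rewrite pmulr_llt0 ?invr_gt0 ?expR_addN_gt0 //.
by rewrite subr_lt0 ltr_expR; lra.
Qed.

Lemma tanh_norm t : `|tanh t| = tanh `|t|.
Proof.
have [t0|t0] := leP 0 t; first by rewrite !ger0_norm // tanh_ge0.
by rewrite !ltr0_norm ?tanh_lt0 // tanhN.
Qed.

Lemma tanh_inj : injective (@tanh R).
Proof.
move=> a b; rewrite /tanh => /eqP.
rewrite eqr_div ?lt0r_neq0 ?expR_addN_gt0 // => /eqP tab.
have : expR a * expR (- b) = expR b * expR (- a) by lra.
by rewrite -!expRD => /expR_inj; lra.
Qed.

Lemma cosh_ge_tangent a b : cosh a * expR (tanh a * (b - a)) <= cosh b.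
Proof.
set h := b - a; set tau := tanh a; set E := expR (tau * h).
have E_gt0 : 0 < E := expR_gt0 _.
(* Tangent lines of expR at tau h bound expR h and expR (- h) from below;
   weighted by expR a and expR (- a) their first-order terms cancel,
   precisely because tau = tanh a. *)
have up : E * (1 + (1 - tau) * h) <= expR h.
  have -> : expR h = E * expR ((1 - tau) * h) by rewrite -expRD; congr expR; ring.
  by rewrite ler_pM2l // expR_ge1Dx.
have down : E * (1 - (1 + tau) * h) <= expR (- h).
  have -> : expR (- h) = E * expR (- ((1 + tau) * h)).
    by rewrite -expRD; congr expR; ring.
  by rewrite ler_pM2l // (le_trans _ (expR_ge1Dx _)) //; lra.
have -> : cosh b = (expR a * expR h + expR (- a) * expR (- h)) / 2.
  by rewrite /cosh -!expRD /h; congr ((expR _ + expR _) / 2); ring.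
have -> : cosh a * E = (expR a * (E * (1 + (1 - tau) * h))
                        + expR (- a) * (E * (1 - (1 + tau) * h))) / 2.
  rewrite /cosh /tau /tanh; field.
  by rewrite gt_eqF ?expR_addN_gt0.
by rewrite ler_pM2r // lerD // ler_pM2l ?expR_gt0.
Qed.

Lemma ln_cosh_tangent a b : ln (cosh a) + tanh a * (b - a) <= ln (cosh b).
Proof.
have pos := mulr_gt0 (cosh_gt0 a) (expR_gt0 (tanh a * (b - a))).
rewrite -[tanh a * _]expRK -lnM ?posrE ?cosh_gt0 ?expR_gt0 //.
by rewrite ler_ln ?posrE ?cosh_gt0 // cosh_ge_tangent.
Qed.

Lemma ln_cosh_norm_tangent a b :
  `|tanh a| * b - tanh a * a <= ln (cosh b) - ln (cosh a).
Proof.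
have [a0|a0] := leP 0 a.
  by have := ln_cosh_tangent a b; rewrite ger0_norm ?tanh_ge0 //; lra.
have := ln_cosh_tangent (- a) b; rewrite ltr0_norm ?tanh_lt0 // coshN tanhN.
lra.
Qed.

End HyperbolicFunctions.

Section MeanField.
Context {R : realType} {n : nat} {A : 'M[R]_n}.
Implicit Types x y u : 'cV[R]_n.

Definition energy x : R :=
  2^-1 * (x^T *m A *m x) 0 0 - \sum_k ln (cosh ((x^T *m A) 0 k)).

Definition mean_field x : 'cV[R]_n := \col_k tanh ((x^T *m A) 0 k).

Lemma bilin_sum x y : (x^T *m A *m y) 0 0 = \sum_k (x^T *m A) 0 k * y k 0.
Proof. by rewrite mxE. Qed.

Lemma bilin_double_sum x y :
  (x^T *m A *m y) 0 0 = \sum_j \sum_i x i 0 * A i j * y j 0.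
Proof.
rewrite mxE; apply: eq_bigr => j _.
by rewrite mxE mulr_suml; apply: eq_bigr => i _; rewrite mxE.
Qed.

Hypothesis symA : A^T = A.

Lemma bilinC x y : (y^T *m A *m x) 0 0 = (x^T *m A *m y) 0 0.
Proof.
have -> : y^T *m A *m x = (x^T *m A *m y)^T.
  by rewrite !trmx_mul trmxK symA mulmxA.
by rewrite mxE.
Qed.

Lemma energy_mean_field_le x :
  energy (mean_field x) <=
  energy x - 2^-1 * ((x - mean_field x)^T *m A *m (x - mean_field x)) 0 0.
Proof.
set T := mean_field x.
have tangent : \sum_k (ln (cosh ((x^T *m A) 0 k))
                       + T k 0 * ((T^T *m A) 0 k - (x^T *m A) 0 k))
               <= \sum_k ln (cosh ((T^T *m A) 0 k)).
  by apply: ler_sum => k _; rewrite [T k 0]mxE; exact: ln_cosh_tangent.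
have cross : \sum_k T k 0 * ((T^T *m A) 0 k - (x^T *m A) 0 k)
             = (T^T *m A *m T) 0 0 - (x^T *m A *m T) 0 0.
  by rewrite !bilin_sum -sumrB; apply: eq_bigr => k _; ring.
have expand : ((x - T)^T *m A *m (x - T)) 0 0 =
    (x^T *m A *m x) 0 0 - 2 * (x^T *m A *m T) 0 0 + (T^T *m A *m T) 0 0.
  have entryB (M N : 'M[R]_1) : (M - N) 0 0 = M 0 0 - N 0 0 by rewrite !mxE.
  rewrite [(x - T)^T]raddfB /= !mulmxBl !mulmxBr !entryB (bilinC x T); ring.
rewrite big_split /= cross in tangent.
rewrite /energy expand; lra.
Qed.

Lemma mean_field_fixE {x} :
  mean_field x = x -> forall k, x k 0 = tanh ((x^T *m A) 0 k).
Proof. by move=> fx k; rewrite -[in LHS]fx mxE. Qed.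

Hypothesis posA : forall u, u != 0 -> 0 < (u^T *m A *m u) 0 0.

Lemma minimizer_mean_field {x} :
  (forall y, energy x <= energy y) -> mean_field x = x.
Proof.
move=> xmin; apply/eqP; rewrite eq_sym -subr_eq0; apply/negPn/negP => /posA.
by have := energy_mean_field_le x; have := xmin (mean_field x); lra.
Qed.

Hypothesis A_ge0 : forall i j, 0 <= A i j.

Lemma energy_norm_le {x} :
  mean_field x = x -> energy (map_mx Num.norm x) <= energy x.
Proof.
move=> /mean_field_fixE fx; set ax := map_mx _ x.
have quad_le : (x^T *m A *m x) 0 0 <= (ax^T *m A *m ax) 0 0.
  rewrite !bilin_double_sum; apply: ler_sum => j _; apply: ler_sum => i _.
  rewrite !mxE; apply: le_trans (ler_norm _) _.
  by rewrite !normrM (ger0_norm (A_ge0 i j)).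
have tangent : (ax^T *m A *m ax) 0 0 - (x^T *m A *m x) 0 0 <=
    \sum_k ln (cosh ((ax^T *m A) 0 k)) - \sum_k ln (cosh ((x^T *m A) 0 k)).
  rewrite !bilin_sum -!sumrB; apply: ler_sum => k _.
  rewrite [ax k 0]mxE fx mulrC (mulrC ((x^T *m A) 0 k)).
  exact: ln_cosh_norm_tangent.
by rewrite /energy; lra.
Qed.

Lemma minimizer_field_norm {x} : (forall y, energy x <= energy y) ->
  forall k, ((map_mx Num.norm x)^T *m A) 0 k = `|(x^T *m A) 0 k|.
Proof.
move=> xmin k; set ax := map_mx _ x.
have fx := minimizer_mean_field xmin.
have axmin y : energy ax <= energy y := le_trans (energy_norm_le fx) (xmin y).
apply: tanh_inj; rewrite -tanh_norm -(mean_field_fixE fx).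
by rewrite -(mean_field_fixE (minimizer_mean_field axmin)) mxE.
Qed.

Lemma minimizer_ge0_spread {x} j k : (forall y, energy x <= energy y) ->
  0 <= x k 0 -> 0 < A j k -> 0 <= x j 0.
Proof.
move=> xmin xk_ge0 Ajk_gt0.
have fx := mean_field_fixE (minimizer_mean_field xmin).
have field_ge0 : 0 <= (x^T *m A) 0 k.
  by rewrite leNgt; apply/negP => /tanh_lt0; rewrite -fx; lra.
have sum0 : \sum_i (`|x i 0| - x i 0) * A i k = 0.
  have := minimizer_field_norm xmin k; rewrite ger0_norm // !mxE => e.
  under eq_bigr do rewrite mulrBl.
  rewrite sumrB; apply/eqP; rewrite subr_eq0; apply/eqP.
  by move: e; congr (_ = _); apply: eq_bigr => i _; rewrite !mxE.
have term_ge0 i : 0 <= (`|x i 0| - x i 0) * A i k.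
  by rewrite mulr_ge0 ?subr_ge0 ?ler_norm.
move: (psumr_eq0P (fun i _ => term_ge0 i) sum0 (i := j) isT) => /eqP.
by rewrite mulf_eq0 (gt_eqF Ajk_gt0) orbF subr_eq0 ger0_def.
Qed.

End MeanField.

Arguments energy {R n} A x.

Section QuadraticForm.
Context {R : realType} {n : nat}.
Implicit Types (B C : 'M[R]_n) (u : 'cV[R]_n).

Lemma quadD B C u :
  (u^T *m (B + C) *m u) 0 0 = (u^T *m B *m u) 0 0 + (u^T *m C *m u) 0 0.
Proof. by rewrite mulmxDr mulmxDl mxE. Qed.

Lemma quadZ (a : R) B u : (u^T *m (a *: B) *m u) 0 0 = a * (u^T *m B *m u) 0 0.
Proof. by rewrite -scalemxAr -scalemxAl mxE. Qed.

Lemma quad_scalar (a : R) u : (u^T *m a%:M *m u) 0 0 = a * \sum_j u j 0 ^+ 2.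
Proof.
rewrite mul_mx_scalar -scalemxAl mxE mxE; congr (_ * _).
by apply: eq_bigr => j _; rewrite mxE.
Qed.

Lemma quad_trmx B u : (u^T *m B^T *m u) 0 0 = (u^T *m B *m u) 0 0.
Proof.
have -> : u^T *m B^T *m u = (u^T *m B *m u)^T.
  by rewrite !trmx_mul trmxK mulmxA.
by rewrite mxE.
Qed.

Lemma quad_cyc_shift u :
  (u^T *m cyc_shift n *m u) 0 0 = \sum_j u (ordS j) 0 * u j 0.
Proof.
rewrite mxE; apply: eq_bigr => j _; congr (_ * _).
rewrite mxE (bigD1 (ordS j)) //= big1 => [|i /negbTE ij]; rewrite !mxE.
  by rewrite eqxx mulr1 addr0.
by rewrite [_ == _]ij mulr0.
Qed.

Lemma sum_ordS_mul_ge (f : 'I_n -> R) :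
  - \sum_j f j ^+ 2 <= \sum_j f (ordS j) * f j.
Proof.
have sq_ge0 : 0 <= \sum_j (f (ordS j) + f j) ^+ 2.
  by apply: sumr_ge0 => j _; exact: sqr_ge0.
have shift : \sum_j f (ordS j) ^+ 2 = \sum_j f j ^+ 2.
  by rewrite [RHS](reindex_inj (@ordS_inj n)).
have expand : \sum_j (f (ordS j) + f j) ^+ 2
    = \sum_j f (ordS j) ^+ 2 + 2 * \sum_j f (ordS j) * f j + \sum_j f j ^+ 2.
  by rewrite mulr_sumr -!big_split /=; apply: eq_bigr => j _; ring.
by rewrite expand shift in sq_ge0; lra.
Qed.

End QuadraticForm.

Section Circulant.
Context {R : realType} {n : nat} {alpha beta : R}.
Local Notation A := (circA n alpha beta).

Lemma phiNE : phiN alpha beta =1 energy A.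
Proof.
move=> x; rewrite /phiN /energy; congr (_ - _).
by apply: eq_bigr => k _; rewrite /ebasis -colE mxE.
Qed.

Lemma circAE i j :
  A i j = beta * (i == j)%:R + alpha * ((i == ordS j)%:R + (j == ordS i)%:R).
Proof. by rewrite !mxE mulr_natr. Qed.

Lemma circA_tr : A^T = A.
Proof.
apply/matrixP => i j; rewrite mxE !circAE (eq_sym j i).
by rewrite (addrC (j == ordS i)%:R).
Qed.

Lemma quad_circA (u : 'cV[R]_n) : (u^T *m A *m u) 0 0
  = beta * \sum_j u j 0 ^+ 2 + 2 * alpha * \sum_j u (ordS j) 0 * u j 0.
Proof. by rewrite quadD quadZ quadD quad_trmx quad_scalar quad_cyc_shift; ring. Qed.

Hypotheses (alpha_ge0 : 0 <= alpha) (beta_ge0 : 0 <= beta).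

Lemma circA_ge0 i j : 0 <= A i j.
Proof. by rewrite circAE addr_ge0 ?mulr_ge0 ?addr_ge0. Qed.

Lemma circA_ordS k : alpha <= A (ordS k) k.
Proof.
by rewrite circAE eqxx mulrDr mulr1 addrCA lerDl addr_ge0 ?mulr_ge0.
Qed.

Lemma circA_posdef : 2 * alpha < beta ->
  forall u : 'cV[R]_n, u != 0 -> 0 < (u^T *m A *m u) 0 0.
Proof.
move=> beta_gt u /cV0Pn [k uk_neq0].
have sq_pos : 0 < \sum_j u j 0 ^+ 2.
  rewrite (bigD1 k) //= ltr_pwDl ?sumr_ge0 // => [|j _]; last exact: sqr_ge0.
  by rewrite exprn_even_gt0 ?uk_neq0 ?orbT.
have := sum_ordS_mul_ge (fun j => u j 0); rewrite quad_circA /= => cross_ge.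
set S := \sum_j _ in sq_pos cross_ge *; set C := \sum_j _ in cross_ge *.
have : 0 < (beta - 2 * alpha) * S by rewrite mulr_gt0 // subr_gt0.
have : 0 <= alpha * (C + S) by rewrite mulr_ge0 // -lerBlDr sub0r.
by lra.
Qed.

End Circulant.

Lemma val_iter_ordS n (i : 'I_n) m : iter m (@ordS n) i = ((i + m) %% n)%N :> nat.
Proof.
elim: m => [|m IH] /=; first by rewrite addn0 modn_small.
by rewrite IH -addn1 modnDml addn1 addnS.
Qed.

Lemma ordS_ind n (P : 'I_n -> Prop) i :
  P i -> (forall k, P k -> P (ordS k)) -> forall k, P k.
Proof.
move=> Pi PS k.
have P_iter m : P (iter m (@ordS n) i) by elim: m => //= m; exact: PS.
suff -> : k = iter (k + n - i) (@ordS n) i by [].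
apply: val_inj; rewrite /= val_iter_ordS.
rewrite (_ : i + (k + n - i) = k + n)%N ?modnDr ?modn_small //.
by have := ltn_ord i; lia.
Qed.

Theorem lemma4p4 (R : realType) (n : nat) (alpha beta : R) (x : 'cV[R]_n) :
  (0 < n)%N ->
  0 < 2 * alpha -> 2 * alpha < beta -> 1 < beta + 2 * alpha ->
  (forall y : 'cV[R]_n, phiN alpha beta x <= phiN alpha beta y) ->
  ((exists k : 'I_n, 0 <= x k 0) <-> (forall k : 'I_n, 0 <= x k 0)).
Proof.
(* [1 < beta + 2 * alpha] only rules out the minimizer x = 0; the sign
   dichotomy does not need it. *)
move=> n_gt0 alpha_gt0 beta_gt _ x_min.
have alpha_ge0 : 0 <= alpha by lra.
have beta_ge0 : 0 <= beta by lra.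
have A_min y : energy (circA n alpha beta) x <= energy (circA n alpha beta) y.
  by rewrite -!phiNE.
have spread k : 0 <= x k 0 -> 0 <= x (ordS k) 0.
  move=> xk_ge0; apply: (minimizer_ge0_spread circA_tr
    (circA_posdef alpha_ge0 beta_gt) (circA_ge0 alpha_ge0 beta_ge0) _ _ A_min xk_ge0).
  by apply: lt_le_trans (circA_ordS alpha_ge0 beta_ge0 k); lra.
split=> [[i xi_ge0] | x_ge0]; last by exists (Ordinal n_gt0).
exact: ordS_ind xi_ge0 spread.
Qed.
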